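(* Let $\{1,\mu_1,\mu_2,\mu_3\}$ be a quaternion basis ($\mu_1,\mu_2$ orthogonal pure unit quaternions, $\mu_3=\mu_1\mu_2$), and let $q=z_1+z_2\mu_2$ with $z_1,z_2$ random variables in $\mathbb{C}_{\mu_1}$ be a centered quaternion Gaussian random variable which is $(\mu_1,\mu_1)$-proper, i.e. $q\stackrel{d}{=}\mu_1 q\mu_1$. Let ${\bf q}_{\mathbb{C}}=[z_1,z_1^{\star},z_2,z_2^{\star}]^T$. Then $$\mathbb{E}[{\bf q}_{\mathbb{C}}{\bf q}_{\mathbb{C}}^{\dagger}]=\begin{bmatrix}\sigma^2 & \alpha & 0 & 0\\ \alpha^{\star} & \sigma^2 & 0 & 0\\ 0 & 0 & \varsigma^2 & \delta\\ 0 & 0 & \delta^{\star} & \varsigma^2\end{bmatrix},$$ where $\sigma^2=\mathbb{E}[|z_1|^2]\in\mathbb{R}$, $\varsigma^2=\mathbb{E}[|z_2|^2]\in\mathbb{R}$, $\alpha=\mathbb{E}[z_1^2]\in\mathbb{C}_{\mu_1}$ and $\delta=\mathbb{E}[z_2^2]\in\mathbb{C}_{\mu_1}$.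
   Context: $\mathbb{H}$ denotes the quaternions; $\mathbb{C}_{\mu_1}=\mathbb{R}\oplus\mu_1\mathbb{R}$ is the commutative subfield isomorphic to $\mathbb{C}$; $^{\star}$ denotes conjugation and $\dagger$ conjugate transpose. A quaternion Gaussian random variable is one whose four real components are jointly Gaussian; centered means $\mathbb{E}[q]=0$. $\stackrel{d}{=}$ denotes equality in distribution. *)

From HB Require Import structures.
From mathcomp Require Import all_boot all_order all_algebra.
From mathcomp Require Import all_classical all_reals all_analysis.

Set Implicit Arguments.
Unset Strict Implicit.
Unset Printing Implicit Defensive.

Import Order.TTheory GRing.Theory Num.Theory.
Local Open Scope classical_set_scope.
Local Open Scope ring_scope.

Record quat (R : realType) := Quat { qr : R; qi : R; qj : R; qk : R }.

Section Quat.
Variable R : realType.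
Implicit Types p q : quat R.

Definition qzero : quat R := Quat 0 0 0 0.
Definition qreal (a : R) : quat R := Quat a 0 0 0.
Definition qadd p q := Quat (qr p + qr q) (qi p + qi q) (qj p + qj q) (qk p + qk q).
Definition qscale (a : R) q := Quat (a * qr q) (a * qi q) (a * qj q) (a * qk q).
Definition qopp q := Quat (- qr q) (- qi q) (- qj q) (- qk q).
Definition qmul p q := Quat
  (qr p * qr q - qi p * qi q - qj p * qj q - qk p * qk q)
  (qr p * qi q + qi p * qr q + qj p * qk q - qk p * qj q)
  (qr p * qj q - qi p * qk q + qj p * qr q + qk p * qi q)
  (qr p * qk q + qi p * qj q - qj p * qi q + qk p * qr q).
Definition qconj q := Quat (qr q) (- qi q) (- qj q) (- qk q).
Definition qnorm2 q := qr q ^+ 2 + qi q ^+ 2 + qj q ^+ 2 + qk q ^+ 2.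

Definition pure_unit q := qr q = 0 /\ qnorm2 q = 1.
Definition qorth p q := qr p * qr q + qi p * qi q + qj p * qj q + qk p * qk q = 0.

Definition quat_basis (mu1 mu2 mu3 : quat R) :=
  [/\ pure_unit mu1, pure_unit mu2, qorth mu1 mu2 & mu3 = qmul mu1 mu2].

Definition inC (mu z : quat R) := exists x y : R, z = qadd (qreal x) (qscale y mu).

Definition qcoords q : R * (R * (R * R)) := (qr q, (qi q, (qj q, qk q))).

Definition qmx4 (rows : seq (seq (quat R))) : 'M[quat R]_4 :=
  \matrix_(i < 4, j < 4) nth qzero (nth [::] rows i) j.

Definition qvec4 (a b c d : quat R) (i : 'I_4) : quat R := nth qzero [:: a; b; c; d] i.
End Quat.

Section Prob.
Context {d : measure_display} {T : measurableType d} {R : realType}.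
Variable P : probability T R.

(** expectation of a real random variable (finite here, since Gaussian) *)
Definition rexpect (f : T -> R) : R := fine (\int[P]_x (f x)%:E)%E.

Definition qexpect (f : T -> quat R) : quat R :=
  Quat (rexpect (fun x => qr (f x))) (rexpect (fun x => qi (f x)))
       (rexpect (fun x => qj (f x))) (rexpect (fun x => qk (f x))).

Definition gaussian_rv (Y : T -> R) :=
  measurable_fun setT Y /\
  exists m s : R,
    (s = 0 /\ forall A : set R, measurable A -> P (Y @^-1` A) = \d_m A) \/
    (0 < s /\ forall A : set R, measurable A -> P (Y @^-1` A) = normal_prob m s A).

(** quaternion Gaussian: the four real components are jointly Gaussian,
    i.e. every real linear combination of them is Gaussian *)
Definition quat_gaussian (q : T -> quat R) :=
  forall u0 u1 u2 u3 : R,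
    gaussian_rv (fun x => u0 * qr (q x) + u1 * qi (q x) + u2 * qj (q x) + u3 * qk (q x)).

Definition quat_centered (q : T -> quat R) := qexpect q = qzero R.

Definition quat_eq_dist (q q' : T -> quat R) :=
  forall A : set (R * (R * (R * R))), measurable A ->
    P ((fun x => qcoords (q x)) @^-1` A) = P ((fun x => qcoords (q' x)) @^-1` A).
End Prob.

From HB Require Import structures.
From mathcomp Require Import all_boot all_order all_algebra.
From mathcomp Require Import all_classical all_reals all_analysis.
From mathcomp Require Import measurable_realfun.
From mathcomp Require Import ring lra.
Set Implicit Arguments.
Unset Strict Implicit.
Unset Printing Implicit Defensive.
Import Order.TTheory GRing.Theory Num.Theory.
Local Open Scope classical_set_scope.
Local Open Scope ring_scope.

(* Since mu1 commutes with C_mu1, squares to -1 and anticommutes with mu2, the map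
   w |-> mu1 w mu1 sends q = z1 + z2 mu2 to -z1 + z2 mu2.  So z1 and z2 are fixed
   polynomial functions of q, and substituting mu1 q mu1 for q negates z1 while
   fixing z2.  Each entry of the off-diagonal blocks of E[q_C q_C^dagger] is
   E[G(q)] for some G changing sign under this substitution; as q and mu1 q mu1 have
   the same law, E[G(q)] = -E[G(q)] = 0.  The diagonal blocks come from the pointwise
   identities z z^* = |z|^2 and z^* z^* = (z z)^*, and z z stays in C_mu1. *)

Section QuatAlgebra.
Variable R : realType.
Implicit Types (a : R) (p q r w mu : quat R).

Lemma quat_ext p q :
  qr p = qr q -> qi p = qi q -> qj p = qj q -> qk p = qk q -> p = q.
Proof. by case: p; case: q => /= ? ? ? ? ? ? ? ? -> -> -> ->. Qed.

Ltac quat_ring := repeat match goal with p : quat _ |- _ => destruct p end;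
  apply: quat_ext; rewrite /=; ring.

Lemma qmulA p q r : qmul p (qmul q r) = qmul (qmul p q) r. Proof. quat_ring. Qed.
Lemma qmulDl p q r : qmul (qadd p q) r = qadd (qmul p r) (qmul q r).
Proof. quat_ring. Qed.
Lemma qmulDr p q r : qmul p (qadd q r) = qadd (qmul p q) (qmul p r).
Proof. quat_ring. Qed.
Lemma qmulNl p q : qmul (qopp p) q = qopp (qmul p q). Proof. quat_ring. Qed.
Lemma qmulNr p q : qmul p (qopp q) = qopp (qmul p q). Proof. quat_ring. Qed.
Lemma qmul_reall a p : qmul (qreal a) p = qscale a p. Proof. quat_ring. Qed.
Lemma qmul_realr a p : qmul p (qreal a) = qscale a p. Proof. quat_ring. Qed.
Lemma qconjK p : qconj (qconj p) = p. Proof. quat_ring. Qed.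
Lemma qconjN p : qconj (qopp p) = qopp (qconj p). Proof. quat_ring. Qed.
Lemma qconjM p q : qconj (qmul p q) = qmul (qconj q) (qconj p). Proof. quat_ring. Qed.
Lemma qmul_conjr p : qmul p (qconj p) = qreal (qnorm2 p).
Proof. rewrite /qnorm2; quat_ring. Qed.
Lemma qmul_conjl p : qmul (qconj p) p = qreal (qnorm2 p).
Proof. rewrite /qnorm2; quat_ring. Qed.

Lemma pure_unit_sqr mu : pure_unit mu -> qmul mu mu = qreal (-1).
Proof.
case: mu => a b c e [/= -> ]; rewrite /qnorm2 /= => nmu.
by apply: quat_ext => /=; [rewrite -nmu|..]; ring.
Qed.

Lemma qorth_anticomm mu nu : pure_unit mu -> pure_unit nu -> qorth mu nu ->
  qmul nu mu = qopp (qmul mu nu).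
Proof.
case: mu => a b c e; case: nu => a' b' c' e' [/= -> _] [/= -> _].
rewrite /qorth /= => o; apply: quat_ext => /=; try ring.
by rewrite !mul0r !add0r in o; rewrite !mul0r !sub0r; nra.
Qed.

(* The real coefficient of [mu] in a point [x + y mu] of [C_mu]. *)
Definition inC_coord mu w := qi w * qi mu + qj w * qj mu + qk w * qk mu.

Lemma inC_im mu w : pure_unit mu -> inC mu w ->
  [/\ qi w = inC_coord mu w * qi mu, qj w = inC_coord mu w * qj mu
    & qk w = inC_coord mu w * qk mu].
Proof.
case: mu => a b c e [/= -> nmu] [x [y ->]].
have -> : inC_coord (Quat 0 b c e) (qadd (qreal x) (qscale y (Quat 0 b c e))) = y.
  by rewrite /inC_coord /= -[RHS]mulr1 -nmu /qnorm2 /=; ring.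
by split; rewrite /=; ring.
Qed.

Lemma inC_sqr mu w : pure_unit mu -> inC mu w -> inC mu (qmul w w).
Proof.
move=> mu_pu [a [b ->]]; exists (a * a - b * b), (2 * a * b).
have -> : qmul (qadd (qreal a) (qscale b mu)) (qadd (qreal a) (qscale b mu))
    = qadd (qreal (a * a))
        (qadd (qscale (2 * a * b) mu) (qscale (b * b) (qmul mu mu))) by quat_ring.
rewrite (pure_unit_sqr mu_pu); quat_ring.
Qed.

Definition sandwich mu w := qmul mu (qmul w mu).

Lemma sandwichK mu w : pure_unit mu -> sandwich mu (sandwich mu w) = w.
Proof.
move=> mu_pu; rewrite /sandwich.
have -> : qmul mu (qmul (qmul mu (qmul w mu)) mu)
    = qmul (qmul mu mu) (qmul w (qmul mu mu)) by quat_ring.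
rewrite (pure_unit_sqr mu_pu) qmul_reall qmul_realr; quat_ring.
Qed.

Lemma qopp_fix_eq0 p : p = qopp p -> p = qzero R.
Proof. by case: p => a b c e [] *; apply: quat_ext => /=; lra. Qed.

Lemma sandwich_inC mu z : pure_unit mu -> inC mu z -> sandwich mu z = qopp z.
Proof.
move=> mu_pu [x [y ->]]; rewrite /sandwich.
have -> : qmul mu (qmul (qadd (qreal x) (qscale y mu)) mu)
    = qmul (qmul mu mu) (qadd (qreal x) (qscale y mu)) by quat_ring.
by rewrite (pure_unit_sqr mu_pu) qmul_reall; quat_ring.
Qed.

Lemma sandwich_inC_mul mu z w :
  inC mu z -> sandwich mu (qmul z w) = qmul z (sandwich mu w).
Proof. by case=> x [y ->]; rewrite /sandwich; quat_ring. Qed.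

Lemma sandwich_qorth mu nu : pure_unit mu -> pure_unit nu -> qorth mu nu ->
  sandwich mu nu = nu.
Proof.
move=> mu_pu nu_pu o; rewrite /sandwich (qorth_anticomm mu_pu nu_pu o).
by rewrite qmulNr qmulA (pure_unit_sqr mu_pu) qmul_reall; quat_ring.
Qed.

Lemma sandwich_split mu1 mu2 z1 z2 :
  pure_unit mu1 -> pure_unit mu2 -> qorth mu1 mu2 -> inC mu1 z1 -> inC mu1 z2 ->
  sandwich mu1 (qadd z1 (qmul z2 mu2)) = qadd (qopp z1) (qmul z2 mu2).
Proof.
move=> mu1_pu mu2_pu o12 z1C z2C.
rewrite /sandwich qmulDl qmulDr -/(sandwich mu1 z1).
rewrite -/(sandwich mu1 (qmul z2 mu2)) sandwich_inC_mul //.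
by rewrite (sandwich_qorth mu1_pu mu2_pu o12) (sandwich_inC mu1_pu z1C).
Qed.

Definition qcomp1 mu1 w := qscale (2^-1) (qadd w (qopp (sandwich mu1 w))).
Definition qcomp2 mu1 mu2 w := qscale (- 2^-1) (qmul (qadd w (sandwich mu1 w)) mu2).

Lemma qcomp1_split mu1 mu2 z1 z2 :
  pure_unit mu1 -> pure_unit mu2 -> qorth mu1 mu2 -> inC mu1 z1 -> inC mu1 z2 ->
  qcomp1 mu1 (qadd z1 (qmul z2 mu2)) = z1.
Proof.
move=> mu1_pu mu2_pu o12 z1C z2C; rewrite /qcomp1 sandwich_split //.
by case: z1 z2 mu2 {z1C z2C mu2_pu o12} => ? ? ? ? [? ? ? ?] [? ? ? ?];
  apply: quat_ext => /=; field.
Qed.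

Lemma qcomp2_split mu1 mu2 z1 z2 :
  pure_unit mu1 -> pure_unit mu2 -> qorth mu1 mu2 -> inC mu1 z1 -> inC mu1 z2 ->
  qcomp2 mu1 mu2 (qadd z1 (qmul z2 mu2)) = z2.
Proof.
move=> mu1_pu mu2_pu o12 z1C z2C; rewrite /qcomp2 sandwich_split //.
have -> : qmul (qadd (qadd z1 (qmul z2 mu2)) (qadd (qopp z1) (qmul z2 mu2))) mu2
    = qscale 2 (qmul z2 (qmul mu2 mu2)) by quat_ring.
rewrite (pure_unit_sqr mu2_pu) qmul_realr.
by case: z2 {z2C} => ? ? ? ?; apply: quat_ext => /=; field.
Qed.

Lemma qcomp1_sandwich mu1 w : pure_unit mu1 ->
  qcomp1 mu1 (sandwich mu1 w) = qopp (qcomp1 mu1 w).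
Proof. by move=> mu1_pu; rewrite /qcomp1 sandwichK //; quat_ring. Qed.

Lemma qcomp2_sandwich mu1 mu2 w : pure_unit mu1 ->
  qcomp2 mu1 mu2 (sandwich mu1 w) = qcomp2 mu1 mu2 w.
Proof. by move=> mu1_pu; rewrite /qcomp2 sandwichK //; quat_ring. Qed.

(* The augmented vector [z1, z1^*, z2, z2^*] as a function of [q]. *)
Definition qaug mu1 mu2 w : 'I_4 -> quat R :=
  qvec4 (qcomp1 mu1 w) (qconj (qcomp1 mu1 w))
        (qcomp2 mu1 mu2 w) (qconj (qcomp2 mu1 mu2 w)).

Lemma qaug_sandwich mu1 mu2 w (i : 'I_4) : pure_unit mu1 ->
  qaug mu1 mu2 (sandwich mu1 w) i
  = if (i < 2)%N then qopp (qaug mu1 mu2 w i) else qaug mu1 mu2 w i.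
Proof.
move=> mu1_pu; rewrite /qaug /qvec4 qcomp1_sandwich // qcomp2_sandwich //.
by case: i => [[|[|[|[|i]]]] ?] //=; rewrite qconjN.
Qed.

Lemma qaug_cross_sandwich mu1 mu2 w (i j : 'I_4) : pure_unit mu1 ->
  (i < 2)%N != (j < 2)%N ->
  qmul (qaug mu1 mu2 (sandwich mu1 w) i) (qconj (qaug mu1 mu2 (sandwich mu1 w) j))
  = qopp (qmul (qaug mu1 mu2 w i) (qconj (qaug mu1 mu2 w j))).
Proof.
move=> mu1_pu; rewrite !qaug_sandwich //.
by case: (i < 2)%N; case: (j < 2)%N => //= _; rewrite ?qconjN ?qmulNl ?qmulNr.
Qed.

End QuatAlgebra.

Section RealExpectation.
Context {d : measure_display} {T : measurableType d} {R : realType}.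
Variable P : probability T R.

Lemma fine_sube_swap (a b : \bar R) : (0 <= a)%E -> (0 <= b)%E ->
  fine (b - a)%E = - fine (a - b)%E.
Proof. by case: a b => [a||] [b||] //= _ _; rewrite ?oppr0 // opprB. Qed.

Lemma fine_sube_mulZ (c : R) (a b : \bar R) : 0 <= c -> (0 <= a)%E -> (0 <= b)%E ->
  fine (c%:E * a - c%:E * b)%E = c * fine (a - b)%E.
Proof.
rewrite le_eqVlt => /predU1P[<-|c0]; first by rewrite !mul0e subee // mul0r.
case: a b => [a||] [b||] //= _ _; rewrite ?gt0_muley ?lte_fin //= ?mulr0 //.
by rewrite mulrBr.
Qed.

(* No integrability is needed: [rexpect] is [fine] of [\int f^+ - \int f^-], and
   both sides of each identity degenerate to [0] together. *)
Lemma rexpectN (f : T -> R) : rexpect P (fun x => - f x) = - rexpect P f.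
Proof.
rewrite /rexpect (_ : (fun x => (- f x)%:E) = (\- (fun x => (f x)%:E))%E); last first.
  by apply/funext => x; rewrite EFinN.
rewrite integralE [in RHS]integralE funeposN funenegN fine_sube_swap //.
  by apply: integral_ge0 => x _; apply: funepos_ge0.
by apply: integral_ge0 => x _; apply: funeneg_ge0.
Qed.

Lemma rexpectZ_ge0 (c : R) (f : T -> R) : 0 <= c -> measurable_fun setT f ->
  rexpect P (fun x => c * f x) = c * rexpect P f.
Proof.
move=> c0 mf; rewrite /rexpect integralE [in RHS]integralE.
have mEf : measurable_fun setT (EFin \o f) by apply/measurable_EFinP.
have -> : ((fun x => (c * f x)%:E)^\+ = fun x => c%:E * (EFin \o f)^\+ x)%E.
  by apply/funext => x; rewrite !funeposE maxe_pMr // mule0 EFinM.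
have -> : ((fun x => (c * f x)%:E)^\- = fun x => c%:E * (EFin \o f)^\- x)%E.
  by apply/funext => x; rewrite !funenegE maxe_pMr // mule0 muleN EFinM.
rewrite !ge0_integralZl_EFin //; last 2 first.
- exact: measurable_funeneg.
- exact: measurable_funepos.
by rewrite fine_sube_mulZ //; apply: integral_ge0 => x _;
  [apply: funepos_ge0 | apply: funeneg_ge0].
Qed.

Lemma rexpectZ (c : R) (f : T -> R) : measurable_fun setT f ->
  rexpect P (fun x => c * f x) = c * rexpect P f.
Proof.
move=> mf; have [c0|c0] := leP 0 c; first exact: rexpectZ_ge0.
rewrite (_ : (fun x => c * f x) = (fun x => - ((- c) * f x))); last first.
  by apply/funext => x; rewrite mulNr opprK.
by rewrite rexpectN rexpectZ_ge0 ?oppr_ge0 1?ltW // mulNr opprK.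
Qed.

Lemma rexpect0 : rexpect P (fun _ => 0) = 0.
Proof. by rewrite /rexpect (_ : (fun _ => 0%:E) = cst 0%E) // integral0. Qed.

Lemma integral_pushforward_EFin d' (Y : measurableType d') (g : T -> Y) (F : Y -> R) :
  measurable_fun setT g -> measurable_fun setT F ->
  (\int[pushforward P g]_y (F y)%:E = \int[P]_x (F (g x))%:E)%E.
Proof.
move=> mg mF; have mEF : measurable_fun setT (EFin \o F) by apply/measurable_EFinP.
rewrite integralE [in RHS]integralE.
rewrite ge0_integral_pushforward //; last exact: measurable_funepos.
rewrite ge0_integral_pushforward //; last exact: measurable_funeneg.
rewrite preimage_setT (_ : (fun x => (F (g x))%:E) = ((EFin \o F) \o g)) //.
by rewrite (funepos_comp (EFin \o F) g) (funeneg_comp (EFin \o F) g).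
Qed.

Lemma rexpect_eq_dist d' (Y : measurableType d') (g g' : T -> Y) (F : Y -> R) :
  measurable_fun setT g -> measurable_fun setT g' -> measurable_fun setT F ->
  (forall A, measurable A -> P (g @^-1` A) = P (g' @^-1` A)) ->
  rexpect P (fun x => F (g x)) = rexpect P (fun x => F (g' x)).
Proof.
move=> mg mg' mF gg'; rewrite /rexpect -integral_pushforward_EFin //.
rewrite -integral_pushforward_EFin //; congr fine.
by apply: eq_measure_integral => A mA _; exact: gg'.
Qed.

End RealExpectation.

Section QuatMeasurable.
Context {R : realType} {d : measure_display} {S : measurableType d}.
Implicit Types (G H : S -> quat R).

Definition qmeas G :=
  [/\ measurable_fun setT (fun x => qr (G x)),
      measurable_fun setT (fun x => qi (G x)),
      measurable_fun setT (fun x => qj (G x))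
    & measurable_fun setT (fun x => qk (G x))].

Ltac measurable_poly := repeat first
  [ apply: measurable_funD | apply: measurable_funB | apply: measurable_funM
  | apply: measurable_funN | exact: measurable_cst | assumption ].

Lemma qmeas_cst w : qmeas (fun _ => w).
Proof. by split; measurable_poly. Qed.
Lemma qmeas_add G H : qmeas G -> qmeas H -> qmeas (fun x => qadd (G x) (H x)).
Proof. by case=> ? ? ? ? [? ? ? ?]; split; measurable_poly. Qed.
Lemma qmeas_mul G H : qmeas G -> qmeas H -> qmeas (fun x => qmul (G x) (H x)).
Proof. by case=> ? ? ? ? [? ? ? ?]; split; measurable_poly. Qed.
Lemma qmeas_opp G : qmeas G -> qmeas (fun x => qopp (G x)).
Proof. by case=> ? ? ? ?; split; measurable_poly. Qed.
Lemma qmeas_scale a G : qmeas G -> qmeas (fun x => qscale a (G x)).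
Proof. by case=> ? ? ? ?; split; measurable_poly. Qed.
Lemma qmeas_conj G : qmeas G -> qmeas (fun x => qconj (G x)).
Proof. by case=> ? ? ? ?; split; measurable_poly. Qed.

Lemma qmeas_sandwich mu G : qmeas G -> qmeas (fun x => sandwich mu (G x)).
Proof. by move=> mG; apply: qmeas_mul (qmeas_cst _) (qmeas_mul mG (qmeas_cst _)). Qed.

Lemma qmeas_qcomp1 mu1 G : qmeas G -> qmeas (fun x => qcomp1 mu1 (G x)).
Proof. by move=> mG; exact/qmeas_scale/qmeas_add/qmeas_opp/qmeas_sandwich. Qed.

Lemma qmeas_qcomp2 mu1 mu2 G : qmeas G -> qmeas (fun x => qcomp2 mu1 mu2 (G x)).
Proof.
by move=> mG; exact/qmeas_scale/qmeas_mul/qmeas_cst/qmeas_add/qmeas_sandwich.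
Qed.

Lemma qmeas_qaug mu1 mu2 G (i : 'I_4) :
  qmeas G -> qmeas (fun x => qaug mu1 mu2 (G x) i).
Proof.
move=> mG; have m1 := qmeas_qcomp1 mu1 mG; have m2 := qmeas_qcomp2 mu1 mu2 mG.
by case: i => [[|[|[|[|i]]]] ?] //=; rewrite /qaug /qvec4 /=; try apply: qmeas_conj.
Qed.

Lemma measurable_qcoords G : qmeas G -> measurable_fun setT (fun x => qcoords (G x)).
Proof.
case=> ? ? ? ?; rewrite /qcoords.
by do 3 apply: measurable_fun_pair => //.
Qed.

End QuatMeasurable.

Definition quat_of_coords {R : realType} (p : R * (R * (R * R))) : quat R :=
  Quat p.1 p.2.1 p.2.2.1 p.2.2.2.

Lemma qcoordsK {R : realType} : cancel (@qcoords R) quat_of_coords.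
Proof. by case. Qed.

Lemma qmeas_quat_of_coords {R : realType} : qmeas (@quat_of_coords R).
Proof.
split => /=.
- exact: measurable_fst.
- exact: measurableT_comp measurable_fst measurable_snd.
- exact: measurableT_comp measurable_fst
    (measurableT_comp measurable_snd measurable_snd).
- exact: measurableT_comp measurable_snd
    (measurableT_comp measurable_snd measurable_snd).
Qed.

Section QuatExpectation.
Context {d : measure_display} {T : measurableType d} {R : realType}.
Variable P : probability T R.

Lemma quat_gaussian_qmeas (q : T -> quat R) : quat_gaussian P q -> qmeas q.
Proof.
move=> qG; split; [move: (qG 1 0 0 0).1|move: (qG 0 1 0 0).1|
  move: (qG 0 0 1 0).1|move: (qG 0 0 0 1).1]; apply: eq_measurable_fun => x _; ring.
Qed.

Lemma qexpect_opp (f : T -> quat R) :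
  qexpect P (fun x => qopp (f x)) = qopp (qexpect P f).
Proof. by rewrite /qexpect /= !rexpectN. Qed.

Lemma qexpect_conj (f : T -> quat R) :
  qexpect P (fun x => qconj (f x)) = qconj (qexpect P f).
Proof. by rewrite /qexpect /= !rexpectN. Qed.

Lemma qexpect_real (f : T -> R) :
  qexpect P (fun x => qreal (f x)) = qreal (rexpect P f).
Proof. by rewrite /qexpect /= rexpect0. Qed.

Lemma inC_qexpect (mu : quat R) (f : T -> quat R) : pure_unit mu -> qmeas f ->
  (forall x, inC mu (f x)) -> inC mu (qexpect P f).
Proof.
move=> mu_pu [m0 m1 m2 m3] fC.
have mc : measurable_fun setT (fun x => inC_coord mu (f x)).
  by apply: measurable_funD; [apply: measurable_funD|];
    apply: measurable_funM => //; exact: measurable_cst.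
exists (rexpect P (fun x => qr (f x))), (rexpect P (fun x => inC_coord mu (f x))).
rewrite /qexpect.
have /funext -> : (fun x => qi (f x)) =1 (fun x => qi mu * inC_coord mu (f x)).
  by move=> x; have [-> _ _] := inC_im mu_pu (fC x); rewrite mulrC.
have /funext -> : (fun x => qj (f x)) =1 (fun x => qj mu * inC_coord mu (f x)).
  by move=> x; have [_ -> _] := inC_im mu_pu (fC x); rewrite mulrC.
have /funext -> : (fun x => qk (f x)) =1 (fun x => qk mu * inC_coord mu (f x)).
  by move=> x; have [_ _ ->] := inC_im mu_pu (fC x); rewrite mulrC.
case: mu_pu => mu_re _; rewrite !rexpectZ //.
by apply: quat_ext => /=; rewrite ?mu_re; ring.
Qed.

Lemma qexpect_conj_pair (f : T -> quat R) :
  [/\ qexpect P (fun x => qmul (f x) (qconj (f x)))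
        = qreal (rexpect P (fun x => qnorm2 (f x))),
      qexpect P (fun x => qmul (f x) (qconj (qconj (f x))))
        = qexpect P (fun x => qmul (f x) (f x)),
      qexpect P (fun x => qmul (qconj (f x)) (qconj (f x)))
        = qconj (qexpect P (fun x => qmul (f x) (f x)))
    & qexpect P (fun x => qmul (qconj (f x)) (qconj (qconj (f x))))
        = qreal (rexpect P (fun x => qnorm2 (f x)))].
Proof.
split; rewrite -?qexpect_real -?qexpect_conj; congr qexpect; apply/funext => x.
- exact: qmul_conjr.
- by rewrite qconjK.
- by rewrite qconjM.
- by rewrite qconjK qmul_conjl.
Qed.

Lemma qexpect_eq_dist (q q' : T -> quat R) (G : quat R -> quat R) :
  qmeas q -> qmeas q' -> qmeas (fun p => G (quat_of_coords p)) ->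
  quat_eq_dist P q q' ->
  qexpect P (fun x => G (q x)) = qexpect P (fun x => G (q' x)).
Proof.
move=> mq mq' [m0 m1 m2 m3] qq'.
have coordE (F : quat R -> R) :
    measurable_fun setT (fun p => F (G (quat_of_coords p))) ->
    rexpect P (fun x => F (G (q x))) = rexpect P (fun x => F (G (q' x))).
  move=> mF; have qE (h : T -> quat R) :
      (fun x => F (G (h x))) = (fun x => F (G (quat_of_coords (qcoords (h x))))).
    by apply/funext => x; rewrite qcoordsK.
  rewrite (qE q) (qE q').
  exact: (rexpect_eq_dist (F := fun p => F (G (quat_of_coords p)))
    (measurable_qcoords mq) (measurable_qcoords mq') mF qq').
rewrite /qexpect (coordE (@qr R)) // (coordE (@qi R)) //.
by rewrite (coordE (@qj R)) // (coordE (@qk R)).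
Qed.

Lemma qexpect_sandwich_odd (q : T -> quat R) mu (G : quat R -> quat R) :
  qmeas q -> qmeas (fun p => G (quat_of_coords p)) ->
  quat_eq_dist P q (fun x => sandwich mu (q x)) ->
  (forall w, G (sandwich mu w) = qopp (G w)) ->
  qexpect P (fun x => G (q x)) = qzero R.
Proof.
move=> mq mG q_sym G_odd; apply: qopp_fix_eq0.
rewrite {1}(qexpect_eq_dist mq (qmeas_sandwich mu mq) mG q_sym) -qexpect_opp.
by congr qexpect; apply/funext => x; exact: G_odd.
Qed.

Lemma qexpect_qaug_cross (q : T -> quat R) mu1 mu2 (i j : 'I_4) :
  pure_unit mu1 -> qmeas q -> quat_eq_dist P q (fun x => sandwich mu1 (q x)) ->
  (i < 2)%N != (j < 2)%N ->
  qexpect P (fun x => qmul (qaug mu1 mu2 (q x) i) (qconj (qaug mu1 mu2 (q x) j)))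
  = qzero R.
Proof.
move=> mu1_pu mq q_sym ij.
pose G w := qmul (qaug mu1 mu2 w i) (qconj (qaug mu1 mu2 w j)).
apply: (qexpect_sandwich_odd (G := G) mq _ q_sym) => [|w].
  by apply: qmeas_mul; [|apply: qmeas_conj]; apply: qmeas_qaug qmeas_quat_of_coords.
exact: qaug_cross_sandwich.
Qed.

End QuatExpectation.

Theorem mainTheorem6 (d : measure_display) (T : measurableType d) (R : realType)
  (P : probability T R) (mu1 mu2 mu3 : quat R) (z1 z2 : T -> quat R) :
  quat_basis mu1 mu2 mu3 ->
  (forall x, inC mu1 (z1 x)) -> (forall x, inC mu1 (z2 x)) ->
  let q := fun x => qadd (z1 x) (qmul (z2 x) mu2) in
  quat_gaussian P q ->
  quat_centered P q ->
  quat_eq_dist P q (fun x => qmul mu1 (qmul (q x) mu1)) ->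
  let qC := fun x => qvec4 (z1 x) (qconj (z1 x)) (z2 x) (qconj (z2 x)) in
  let sigma2 : R := rexpect P (fun x => qnorm2 (z1 x)) in
  let varsigma2 : R := rexpect P (fun x => qnorm2 (z2 x)) in
  let alpha := qexpect P (fun x => qmul (z1 x) (z1 x)) in
  let delta := qexpect P (fun x => qmul (z2 x) (z2 x)) in
  let O := qzero R in
  [/\ \matrix_(i < 4, j < 4) qexpect P (fun x => qmul (qC x i) (qconj (qC x j)))
      = qmx4 [:: [:: qreal sigma2; alpha; O; O];
                 [:: qconj alpha; qreal sigma2; O; O];
                 [:: O; O; qreal varsigma2; delta];
                 [:: O; O; qconj delta; qreal varsigma2]],
      inC mu1 alpha & inC mu1 delta].
Proof.
move=> [mu1_pu mu2_pu o12 _] z1C z2C q qG _ q_sym qC sigma2 varsigma2 alpha delta O.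
have mq := quat_gaussian_qmeas qG.
have z1E : z1 = fun x => qcomp1 mu1 (q x).
  by apply/funext => x; rewrite qcomp1_split.
have z2E : z2 = fun x => qcomp2 mu1 mu2 (q x).
  by apply/funext => x; rewrite qcomp2_split.
have qCE : qC = fun x => qaug mu1 mu2 (q x).
  by rewrite /qC z1E z2E.
split; last 2 first.
- apply: inC_qexpect => // [|x]; last exact: inC_sqr.
  by rewrite z1E; apply: qmeas_mul; apply: qmeas_qcomp1.
- apply: inC_qexpect => // [|x]; last exact: inC_sqr.
  by rewrite z2E; apply: qmeas_mul; apply: qmeas_qcomp2.
apply/matrixP => i j; rewrite !mxE.
have [? ? ? ?] := qexpect_conj_pair P z1; have [? ? ? ?] := qexpect_conj_pair P z2.
case: i => [[|[|[|[|i]]]] Hi] //; case: j => [[|[|[|[|j]]]] Hj] //.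
all: first [done | by rewrite qCE qexpect_qaug_cross].
Qed.
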